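(* Let $D_0, D_1, D_2$ be three mutually tangent disks such that $D_1$ and $D_2$ are inner disks of positive curvatures $B_1$ and $B_2$, and $D_0$ is an outer disk of negative curvature $B_0$ containing them. Let $\mathbf a = \mathrm{spin}(D_0,D_1)$ and $\mathbf b = \mathrm{spin}(D_0,D_2)$ be tangency spinors, viewed as vectors in $\mathbb R^2$, and let $M=[\mathbf a\ \mathbf b]$ be the $2\times 2$ matrix with columns $\mathbf a,\mathbf b$. Put $B = |\mathbf a\times\mathbf b| = |\det M|$. Then $$B_0=-B,\qquad B_1 = B+\|\mathbf a\|^2,\qquad B_2 = B+\|\mathbf b\|^2 .$$ Moreover, setting $$B_{3} = B+\|\mathbf a+\mathbf b\|^2 = B+\|\mathbf a\|^2+\|\mathbf b\|^2+2\,\mathbf a\cdot\mathbf b,\qquad B_{4} = B+\|\mathbf a-\mathbf b\|^2 = B+\|\mathbf a\|^2+\|\mathbf b\|^2-2\,\mathbf a\cdot\mathbf b,$$ both quadruples $(B_0,B_1,B_2,B_3)$ and $(B_0,B_1,B_2,B_4)$ satisfy the Descartes formula $2(A^2+B^2+C^2+D^2)=(A+B+C+D)^2$.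
   Context: A disk is the interior (inner disk) or the exterior (outer disk) of a circle; an inner disk of radius $r>0$ has curvature $1/r>0$, an outer disk bounded by a circle of radius $r$ is assigned signed radius $-r$ and curvature $-1/r<0$. Tangent disks are assumed not to overlap. Identify the plane with $\mathbb C\cong\mathbb R^2$. For an ordered pair $(A,B)$ of tangent disks with centers $c_A,c_B\in\mathbb C$ and signed radii $r_A,r_B$, the tangency spinor is $\mathrm{spin}(A,B)=\pm\sqrt{(c_B-c_A)/(r_Ar_B)}\in\mathbb C$, defined up to sign and regarded as the vector $(\mathrm{Re},\mathrm{Im})\in\mathbb R^2$. For $\mathbf a=(x,y)^T,\mathbf b=(x',y')^T\in\mathbb R^2$: $\mathbf a\cdot\mathbf b=xx'+yy'$, $\mathbf a\times\mathbf b=xy'-x'y=\det[\mathbf a\ \mathbf b]$, $\|\mathbf a\|^2=\mathbf a\cdot\mathbf a$. *)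

From HB Require Import structures.
From mathcomp Require Import all_boot all_order all_algebra.
Set Implicit Arguments. Unset Strict Implicit. Unset Printing Implicit Defensive.
Import Order.TTheory GRing.Theory Num.Theory.
Local Open Scope ring_scope.

Section Disks.
Variable R : rcfType.

(* A point / vector of the plane C ~ R^2, as (Re, Im). *)
Definition vec := (R * R)%type.

Definition vdot (a b : vec) : R := a.1 * b.1 + a.2 * b.2.
Definition vcross (a b : vec) : R := a.1 * b.2 - b.1 * a.2.
Definition vnorm2 (a : vec) : R := vdot a a.
Definition vadd (a b : vec) : vec := (a.1 + b.1, a.2 + b.2).
Definition vsub (a b : vec) : vec := (a.1 - b.1, a.2 - b.2).
Definition vdist (a b : vec) : R := Num.sqrt (vnorm2 (vsub a b)).

Record disk := Disk { center : vec; srad : R }.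
Definition inner (D : disk) : Prop := 0 < srad D.
Definition outer (D : disk) : Prop := srad D < 0.
Definition curv (D : disk) : R := (srad D)^-1.

(* Tangent, non-overlapping disks: two inner disks are externally tangent;
   an inner disk and an outer disk are tangent with the inner disk inside
   the bounding circle of the outer one (internal tangency, the inner radius
   being strictly smaller); two outer disks always overlap. *)
Definition tangent (A B : disk) : Prop :=
  (inner A /\ inner B /\ vdist (center A) (center B) = srad A + srad B) \/
  (srad A * srad B < 0 /\ srad A + srad B < 0 /\
   vdist (center A) (center B) = - (srad A + srad B)).

(* s = (x, y) is a tangency spinor of (A, B): (x + i y)^2 = (c_B - c_A)/(r_A r_B),
   i.e. s is one of the two square roots (the choice of sign is free). *)
Definition is_spin (A B : disk) (s : vec) : Prop :=
  let d := vsub (center B) (center A) in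
  let k := srad A * srad B in
  s.1 ^+ 2 - s.2 ^+ 2 = d.1 / k /\ 2 * s.1 * s.2 = d.2 / k.

Definition descartes (a b c d : R) : Prop :=
  2 * (a ^+ 2 + b ^+ 2 + c ^+ 2 + d ^+ 2) = (a + b + c + d) ^+ 2.

End Disks.

From HB Require Import structures.
From mathcomp Require Import all_boot all_order all_algebra.
From mathcomp Require Import ring.
Set Implicit Arguments. Unset Strict Implicit. Unset Printing Implicit Defensive.
Import Order.TTheory GRing.Theory Num.Theory.
Local Open Scope ring_scope.

(* With centres [c_i] and signed radii [r_i], the spinors satisfy
   [c_1 - c_0 = r_0 r_1 a^2] and [c_2 - c_0 = r_0 r_2 b^2] as complex numbers.
   Since [|z^2| = |z|^2], internal tangency [|c_i - c_0| = -(r_0 + r_i)] gives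
   [|a|^2 r_0 r_1 = r_0 + r_1] (both sides being negative), i.e.
   [B_1 = |a|^2 - B_0], and likewise for [b]. In the triangle of centres the
   law of cosines computes [Re (a^2 conj b^2) = (a.b)^2 - (a x b)^2], while
   Lagrange's identity gives [|a|^2 |b|^2 = (a.b)^2 + (a x b)^2]; subtracting,
   [(a x b)^2 = B_0^2]. The Descartes relations are then polynomial identities
   in [a], [b] and [B] that only use [B^2 = (a x b)^2]. *)

Section SpinorGeometry.
Variable R : rcfType.
Implicit Types (u v w a b s : vec R) (k l : R) (A B : disk R).

Definition vopp u : vec R := (- u.1, - u.2).
Definition vscale k u : vec R := (k * u.1, k * u.2).
(* the complex square [(x + i y)^2] of [(x, y)] *)
Definition vsq s : vec R := (s.1 ^+ 2 - s.2 ^+ 2, 2 * s.1 * s.2).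

Lemma vnorm2_ge0 u : 0 <= vnorm2 u.
Proof. by rewrite /vnorm2 /vdot addr_ge0 // -expr2 sqr_ge0. Qed.

Lemma vnorm2_vsubC u v : vnorm2 (vsub u v) = vnorm2 (vsub v u).
Proof. by rewrite /vnorm2 /vdot /=; ring. Qed.

Lemma vnorm2_vopp u : vnorm2 (vopp u) = vnorm2 u.
Proof. by rewrite /vnorm2 /vdot /=; ring. Qed.

Lemma vcross_vopp a b : vcross a (vopp b) = - vcross a b.
Proof. by rewrite /vcross /=; ring. Qed.

Lemma vnorm2_vadd a b : vnorm2 (vadd a b) = vnorm2 a + vnorm2 b + 2 * vdot a b.
Proof. by rewrite /vnorm2 /vdot /=; ring. Qed.

Lemma vnorm2_vsub a b : vnorm2 (vsub a b) = vnorm2 a + vnorm2 b - 2 * vdot a b.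
Proof. by rewrite /vnorm2 /vdot /=; ring. Qed.

Lemma vnorm2_vscale k u : vnorm2 (vscale k u) = k ^+ 2 * vnorm2 u.
Proof. by rewrite /vnorm2 /vdot /=; ring. Qed.

Lemma vdot_vscale k l u v : vdot (vscale k u) (vscale l v) = k * l * vdot u v.
Proof. by rewrite /vdot /=; ring. Qed.

Lemma vnorm2_vsq s : vnorm2 (vsq s) = vnorm2 s ^+ 2.
Proof. by rewrite /vnorm2 /vdot /=; ring. Qed.

Lemma vdot_vsq a b : vdot (vsq a) (vsq b) = vdot a b ^+ 2 - vcross a b ^+ 2.
Proof. by rewrite /vdot /vcross /=; ring. Qed.

Lemma lagrange_identity a b :
  vnorm2 a * vnorm2 b = vdot a b ^+ 2 + vcross a b ^+ 2.
Proof. by rewrite /vnorm2 /vdot /vcross /=; ring. Qed.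

Lemma cosine_law u v w :
  2 * vdot (vsub u w) (vsub v w) =
  vnorm2 (vsub u w) + vnorm2 (vsub v w) - vnorm2 (vsub u v).
Proof. by rewrite /vnorm2 /vdot /=; ring. Qed.

Lemma vnorm2_vdist u v : vnorm2 (vsub u v) = vdist u v ^+ 2.
Proof. by rewrite /vdist sqr_sqrtr // vnorm2_ge0. Qed.

Lemma tangent_vnorm2 A B :
  tangent A B -> vnorm2 (vsub (center A) (center B)) = (srad A + srad B) ^+ 2.
Proof. by rewrite vnorm2_vdist => -[[_ [_ ->]] | [_ [_ ->]]]; rewrite ?sqrrN. Qed.

Lemma tangent_outer A B :
  outer A -> tangent A B -> srad A * srad B < 0 /\ srad A + srad B < 0.
Proof.
rewrite /outer /inner => oA [[iA _] | [? [? _]]] //.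
by move: (lt_trans iA oA); rewrite ltxx.
Qed.

Lemma is_spin_vsq A B s : srad A * srad B != 0 -> is_spin A B s ->
  vsub (center B) (center A) = vscale (srad A * srad B) (vsq s).
Proof.
move=> k_neq0 [s1 s2]; rewrite /vscale /vsq /= s1 s2.
by rewrite !(mulrC (srad A * srad B)) !divfK //; case: vsub.
Qed.

Lemma spin_vnorm2 A B s : outer A -> tangent A B -> is_spin A B s ->
  vnorm2 s * (srad A * srad B) = srad A + srad B.
Proof.
move=> oA tAB sAB; have [k_lt0 sum_lt0] := tangent_outer oA tAB.
have := tangent_vnorm2 tAB.
rewrite vnorm2_vsubC (is_spin_vsq (ltr0_neq0 k_lt0) sAB) vnorm2_vscale vnorm2_vsq.
move=> sq_eq; have lhs_le0 : vnorm2 s * (srad A * srad B) <= 0.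
  by rewrite mulr_ge0_le0 ?vnorm2_ge0 ?ltW.
apply: oppr_inj; apply/eqP.
rewrite -(@eqrXn2 _ 2) ?oppr_ge0 ?(ltW sum_lt0) // !sqrrN -sq_eq.
by apply/eqP; ring.
Qed.

Lemma curv_spin A B s : outer A -> tangent A B -> is_spin A B s ->
  curv B = vnorm2 s - curv A.
Proof.
move=> oA tAB sAB; have [k_lt0 _] := tangent_outer oA tAB.
have := ltr0_neq0 k_lt0; rewrite mulf_eq0 negb_or => /andP[rA_neq0 rB_neq0].
have -> : vnorm2 s = (srad A + srad B) / (srad A * srad B).
  by rewrite -(spin_vnorm2 oA tAB sAB) mulfK // mulf_neq0.
by rewrite /curv; field; apply/andP.
Qed.

Lemma spin_vcross_sqr D0 D1 D2 a b :
  outer D0 -> tangent D0 D1 -> tangent D0 D2 -> tangent D1 D2 ->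
  is_spin D0 D1 a -> is_spin D0 D2 b -> vcross a b ^+ 2 = curv D0 ^+ 2.
Proof.
move=> o0 t01 t02 t12 sa sb.
have [k1_lt0 _] := tangent_outer o0 t01; have [k2_lt0 _] := tangent_outer o0 t02.
have norm_a := spin_vnorm2 o0 t01 sa; have norm_b := spin_vnorm2 o0 t02 sb.
have := cosine_law (center D1) (center D2) (center D0).
rewrite -!(vnorm2_vsubC (center D0)) !tangent_vnorm2 //.
rewrite (is_spin_vsq (ltr0_neq0 k1_lt0) sa) (is_spin_vsq (ltr0_neq0 k2_lt0) sb).
rewrite vdot_vscale vdot_vsq => cosine.
have lagrange := lagrange_identity a b.
have := ltr0_neq0 k1_lt0; rewrite mulf_eq0 negb_or => /andP[r0_neq0 r1_neq0].
have := ltr0_neq0 k2_lt0; rewrite mulf_eq0 negb_or => /andP[_ r2_neq0].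
have r12_neq0 := mulf_neq0 r1_neq0 r2_neq0.
have product : srad D0 * srad D1 * (srad D0 * srad D2) * (vnorm2 a * vnorm2 b) =
                 (srad D0 + srad D1) * (srad D0 + srad D2).
  by rewrite -norm_a -norm_b; ring.
have cross_scaled : 4 * (srad D1 * srad D2 * (srad D0 ^+ 2 * vcross a b ^+ 2)) =
                    4 * (srad D1 * srad D2 * 1).
  transitivity (2 * (srad D0 * srad D1 * (srad D0 * srad D2) * (vnorm2 a * vnorm2 b))
    - 2 * (srad D0 * srad D1 * (srad D0 * srad D2) * (vdot a b ^+ 2 - vcross a b ^+ 2))).
    by rewrite lagrange; ring.
  by rewrite product cosine; ring.
have four_neq0 : 4 != 0 :> R by rewrite pnatr_eq0.
move/(mulfI four_neq0)/(mulfI r12_neq0): cross_scaled => cross_scaled.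
rewrite /curv exprVn -[vcross a b ^+ 2](mulKf (expf_neq0 2 r0_neq0)).
by rewrite cross_scaled mulr1.
Qed.

Lemma spin_vcross_norm D0 D1 D2 a b :
  outer D0 -> tangent D0 D1 -> tangent D0 D2 -> tangent D1 D2 ->
  is_spin D0 D1 a -> is_spin D0 D2 b -> `|vcross a b| = - curv D0.
Proof.
move=> o0 t01 t02 t12 sa sb; have c0_lt0 : curv D0 < 0 by rewrite /curv invr_lt0.
rewrite -(ler0_norm (ltW c0_lt0)); apply/eqP.
rewrite -(@eqrXn2 _ 2) ?normr_ge0 // !real_normK ?num_real //.
by rewrite (spin_vcross_sqr o0 t01 t02 t12 sa sb).
Qed.

Lemma descartes_vadd a b k : k ^+ 2 = vcross a b ^+ 2 ->
  descartes (- k) (k + vnorm2 a) (k + vnorm2 b) (k + vnorm2 (vadd a b)).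
Proof.
move=> k_sqr; rewrite /descartes; apply/eqP; rewrite -subr_eq0; apply/eqP.
transitivity (4 * (k ^+ 2 - vcross a b ^+ 2)).
  by rewrite /vnorm2 /vdot /vcross /=; ring.
by rewrite k_sqr subrr mulr0.
Qed.

Lemma descartes_vsub a b k : k ^+ 2 = vcross a b ^+ 2 ->
  descartes (- k) (k + vnorm2 a) (k + vnorm2 b) (k + vnorm2 (vsub a b)).
Proof.
by rewrite -(vnorm2_vopp b) => k_sqr; apply: descartes_vadd; rewrite vcross_vopp sqrrN.
Qed.

End SpinorGeometry.

Theorem proposition3p1 (R : rcfType) (D0 D1 D2 : disk R) (a b : vec R) :
  outer D0 -> inner D1 -> inner D2 ->
  tangent D0 D1 -> tangent D0 D2 -> tangent D1 D2 ->
  is_spin D0 D1 a -> is_spin D0 D2 b ->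
  let B := `|vcross a b| in
  let B3 := B + vnorm2 (vadd a b) in
  let B4 := B + vnorm2 (vsub a b) in
  curv D0 = - B /\
  curv D1 = B + vnorm2 a /\
  curv D2 = B + vnorm2 b /\
  B3 = B + vnorm2 a + vnorm2 b + 2 * vdot a b /\
  B4 = B + vnorm2 a + vnorm2 b - 2 * vdot a b /\
  descartes (curv D0) (curv D1) (curv D2) B3 /\
  descartes (curv D0) (curv D1) (curv D2) B4.
Proof.
(* [inner D1] and [inner D2] already follow from tangency to the outer disk [D0]. *)
move=> o0 _ _ t01 t02 t12 sa sb B B3 B4.
have c0 : curv D0 = - B by rewrite /B (spin_vcross_norm o0 t01 t02 t12 sa sb) opprK.
have c1 : curv D1 = B + vnorm2 a by rewrite (curv_spin o0 t01 sa) c0 opprK addrC.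
have c2 : curv D2 = B + vnorm2 b by rewrite (curv_spin o0 t02 sb) c0 opprK addrC.
have B_sqr : B ^+ 2 = vcross a b ^+ 2 by rewrite real_normK ?num_real.
split; first exact: c0.
split; first exact: c1.
split; first exact: c2.
split; first by rewrite /B3 vnorm2_vadd !addrA.
split; first by rewrite /B4 vnorm2_vsub !addrA.
by rewrite c0 c1 c2; split; [apply: descartes_vadd | apply: descartes_vsub].
Qed.
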